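(* Let $f \in \mathbb{N}_0[x^{\pm 1}]$ satisfy $|\operatorname{supp}(f)| \geq 3$. Then $f = g + h$ for some $g, h \in \mathbb{N}_0[x^{\pm 1}]$ such that $g$ is hyper-monolithic and $h(1) \leq g(1)$.
   Context: $\mathbb{N}_0[x^{\pm 1}]$ denotes the semiring of Laurent polynomials in $x$ with nonnegative integer coefficients; $\operatorname{supp}(f)$ is the set of exponents occurring in $f$ with nonzero coefficient. Writing $f = \sum_{i=0}^{n} c_i x^{k_i}$ with $c_i$ positive integers and $k_0 > \cdots > k_n$, $f$ is hyper-monolithic if $|\operatorname{supp}(f)| > 1$ and either $k_0 - k_1 < k_i - k_{i+1}$ for every $i \in \{1,\ldots,n-1\}$, or $k_{n-1} - k_n < k_j - k_{j+1}$ for every $j \in \{0,\ldots,n-2\}$. *)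

From HB Require Import structures.
From mathcomp Require Import all_boot all_order all_algebra.
From mathcomp Require Import finmap.
Set Implicit Arguments. Unset Strict Implicit. Unset Printing Implicit Defensive.
Import Order.TTheory GRing.Theory Num.Theory.
Local Open Scope fset_scope.
Local Open Scope ring_scope.

(* Laurent polynomials in x with nonnegative integer coefficients:
   finitely supported maps  exponent (int) -> coefficient (nat), default 0.
   f represents  sum_k (f k) x^k. *)
Definition laurentN := {fsfun int -> nat with 0%N}.

Definition lsupp (f : laurentN) : {fset int} := finsupp f.

Definition lexps (f : laurentN) : seq int := sort (fun a b : int => b <= a) (lsupp f).

Definition leval1 (f : laurentN) : nat := (\sum_(k <- lsupp f) f k)%N.

Definition hyper_monolithic (f : laurentN) : Prop :=
  let s := lexps f in
  let n := (size s).-1 in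
  (1 < #|` lsupp f|)%N /\
  ((forall i : nat, (1 <= i)%N -> (i.+1 <= n)%N ->
        s`_0 - s`_1 < s`_i - s`_i.+1)
   \/
   (forall j : nat, (j.+2 <= n)%N ->
        s`_n.-1 - s`_n < s`_j - s`_j.+1)).

From mathcomp Require Import all_boot all_order all_algebra.
From mathcomp Require Import finmap.
From mathcomp Require Import zify.
Set Implicit Arguments. Unset Strict Implicit. Unset Printing Implicit Defensive.
Import Order.TTheory GRing.Theory Num.Theory.
Local Open Scope ring_scope.

(* List the exponents of f as k_0 > ... > k_n and call k_m - k_(m+1) the m-th gap; let g
   be the least gap, attained first at position i and last at position j.  Keeping the
   positions i, i+1, i+3, i+5, ... up to j+1 and every position beyond j+1 gives a
   hyper-monolithic polynomial: its first gap is g, and each other gap either spans two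
   gaps of f (so exceeds g) or lies beyond j.  A second such set, {i+1, i+2, i+4, ...} if
   the (i+1)-th gap is also g and {i, i+1, i+2, i+4, ...} otherwise, covers the remaining
   positions from i on.  Mirroring both constructions (x -> 1/x) covers the positions up to
   j+1.  These four restrictions of f cover every exponent at least twice, so one of them
   carries at least half of f(1): take it as g and the rest of f as h. *)

Definition gap (s : seq int) k := s`_k - s`_k.+1.

Definition first_gap_least (s : seq int) :=
  (1 < size s)%N /\ forall m, (0 < m)%N -> (m.+1 < size s)%N -> gap s 0 < gap s m.

Definition last_gap_least (s : seq int) :=
  (1 < size s)%N /\ forall m, (m.+2 < size s)%N -> gap s (size s).-2 < gap s m.

Definition sieve (s : seq int) (X : pred nat) := [seq s`_k | k <- iota 0 (size s) & X k].

Section LeastGap.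
Variables (s : seq int) (g : int).
Hypotheses (g_gt0 : 0 < g) (g_min : forall k, (k.+1 < size s)%N -> g <= gap s k).

Lemma least_gap_lt_span a b : (a.+1 < b)%N -> (b < size s)%N -> g < s`_a - s`_b.
Proof.
move=> ab bs; have le_ab : (a <= b)%N by lia.
have -> : s`_a - s`_b = \sum_(a <= k < b) gap s k.
  rewrite (telescope_sumr_eq (fun k => - s`_k)) 1?addrC ?opprK // => k _.
  by rewrite /gap opprK addrC.
apply: lt_le_trans (ler_sum_nat (F := fun=> g) _) => [|k /andP[_ kb]]; last by apply: g_min; lia.
by rewrite sumr_const_nat -[X in X < _]mulr1n ltr_pMn2l //; lia.
Qed.

Lemma first_gap_least_sieve (X : pred nat) p :
  (p.+1 < size s)%N -> X p -> X p.+1 -> (forall k, (k < p)%N -> ~~ X k) -> gap s p = g ->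
  (forall a, (p < a)%N -> X a -> X a.+1 -> (a.+1 < size s)%N -> g < gap s a) ->
  first_gap_least (sieve s X).
Proof.
move=> pN Xp Xp1 X_lt_p gp gt_after.
set ks := [seq k <- iota 0 (size s) | X k].
pose l := p.+1 :: [seq k <- iota p.+2 (size s - p.+2) | X k].
have ksE : ks = p :: l.
  rewrite /ks {1}(_ : size s = p + (size s - p.+2).+2)%N; last by lia.
  rewrite iotaD filter_cat (@eq_in_filter _ _ pred0) ?filter_pred0 /= ?Xp ?Xp1 //.
  by move=> k; rewrite mem_iota => /andP[_ kp]; apply/negbTE/X_lt_p.
have ks_sorted : sorted ltn ks by apply: sorted_filter; [apply: ltn_trans | apply: iota_ltn_sorted].
have pl : path ltn p l by rewrite -[path _ _ _]/(sorted ltn (p :: l)) -ksE.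
have l_sorted : sorted ltn l := path_sorted pl.
have l_mem a : a \in l -> [/\ (p < a)%N, X a & (a < size s)%N].
  move=> al; have : a \in ks by rewrite ksE inE al orbT.
  rewrite mem_filter mem_iota => /andP[-> /andP[_ aN]]; split => //.
  by move: pl => /(order_path_min ltn_trans) /allP; apply.
have l_head : nth 0%N l 0 = p.+1 by [].
have l_gt0 : (0 < size l)%N by [].
clearbody l; rewrite /sieve -/ks ksE map_cons; split => [|[|m] // _]; first by rewrite /= size_map.
rewrite /= size_map ltnS /gap /= => mN.
have m_lt := ltnW mN.
rewrite !(nth_map 0%N) // l_head -/(gap s p) gp.
have ab : (nth 0 l m < nth 0 l m.+1)%N by apply: (sorted_ltn_nth ltn_trans 0%N l_sorted); rewrite ?inE.
have [pa Xa aN] := l_mem _ (mem_nth 0%N m_lt).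
have [_ Xb bN] := l_mem _ (mem_nth 0%N mN).
have [eb|nb] := eqVneq (nth 0%N l m.+1) (nth 0%N l m).+1.
  by rewrite eb; apply: gt_after => //; rewrite -eb.
by apply: least_gap_lt_span => //; lia.
Qed.
End LeastGap.

Definition mirror (s : seq int) := rev (map -%R s).

Lemma size_mirror s : size (mirror s) = size s.
Proof. by rewrite size_rev size_map. Qed.

Lemma nth_mirror s k : (k < size s)%N -> (mirror s)`_k = - s`_((size s).-1 - k).
Proof.
move=> ks; rewrite nth_rev ?size_map // (nth_map 0); last by rewrite ltn_subrL (leq_ltn_trans _ ks).
by rewrite (_ : size s - k.+1 = (size s).-1 - k)%N //; lia.
Qed.

Lemma gap_mirror s k : (k.+1 < size s)%N -> gap (mirror s) k = gap s (size s - k.+2).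
Proof.
move=> ks; rewrite /gap !nth_mirror; try lia.
have -> : ((size s).-1 - k = (size s - k.+2).+1)%N by lia.
have -> : ((size s).-1 - k.+1 = size s - k.+2)%N by lia.
by rewrite opprK addrC.
Qed.

Lemma last_gap_least_mirror s : first_gap_least (mirror s) -> last_gap_least s.
Proof.
rewrite /first_gap_least size_mirror => -[s2 least]; split => // m ms.
have := least (size s - m.+2)%N; rewrite !gap_mirror; try lia.
by rewrite subn2 (_ : size s - (size s - m.+2).+2 = m)%N; [apply; lia | lia].
Qed.

Lemma rev_iota0 n : rev (iota 0 n) = [seq n.-1 - k | k <- iota 0 n]%N.
Proof.
apply: (@eq_from_nth _ 0%N); rewrite ?size_rev ?size_map // => k; rewrite size_iota => kn.
by rewrite nth_rev ?size_iota // (nth_map 0%N) ?size_iota // !nth_iota //; lia.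
Qed.

Lemma sieve_mirror s X :
  sieve (mirror s) X = mirror (sieve s (fun k => X ((size s).-1 - k)%N)).
Proof.
rewrite [RHS]/mirror /sieve size_mirror -map_comp -map_rev -filter_rev rev_iota0 filter_map.
rewrite -map_comp [in RHS](@eq_in_filter _ _ X) => [|k]; last first.
  by rewrite mem_iota /= => kN; congr X; lia.
apply/eq_in_map => k; rewrite mem_filter mem_iota => /andP[_ kN] /=.
by rewrite nth_mirror.
Qed.

Definition least_gap_ends (s : seq int) i j :=
  [/\ (i <= j)%N && (j.+1 < size s)%N, gap s j = gap s i,
      forall k, (k.+1 < size s)%N -> gap s i <= gap s k,
      forall k, (k < i)%N -> gap s i < gap s k &
      forall k, (j < k)%N -> (k.+1 < size s)%N -> gap s i < gap s k].

Lemma exists_least_gap_ends s : (1 < size s)%N -> exists i j, least_gap_ends s i j.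
Proof.
move=> s2; pose n := (size s).-1.
have n_gt0 : (0 < n)%N by lia.
have [i0 _ i0_min] := @arg_minP _ _ _ (Ordinal n_gt0) xpredT (fun k : 'I_n => gap s k) isT.
pose P k := (k < n)%N && (gap s k == gap s i0).
have min_le k : (k < n)%N -> gap s i0 <= gap s k by move=> kn; exact: (i0_min (Ordinal kn)).
have exP : exists k, P k by exists i0; rewrite /P ltn_ord eqxx.
have ubP k : P k -> (k <= n)%N by case/andP => /ltnW.
case: (ex_minnP exP) => i /andP[i_n /eqP gi] i_first.
case: (ex_maxnP exP ubP) => j Pj j_last; have /andP[j_n /eqP gj] := Pj.
have strict k : (k < n)%N -> ~~ P k -> gap s i < gap s k.
  by move=> kn; rewrite /P kn gi lt_def eq_sym min_le // andbT.
exists i, j; split; rewrite ?gi ?gj //.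
- by rewrite i_first //; lia.
- by move=> k ks; apply: min_le; lia.
- move=> k ki; rewrite -gi; apply: strict; first by lia.
  by apply/negP => /i_first; lia.
- move=> k jk ks; rewrite -gi; apply: strict; first by lia.
  by apply/negP => /j_last; lia.
Qed.

Lemma least_gap_ends_mirror s i j :
  least_gap_ends s i j -> least_gap_ends (mirror s) (size s - j.+2) (size s - i.+2).
Proof.
case=> /andP[ij jN] gj gmin before after.
have gapE k : (k.+1 < size s)%N -> gap (mirror s) k = gap s (size s - k.+2) := @gap_mirror s k.
have gi' : gap (mirror s) (size s - j.+2) = gap s i.
  by rewrite gapE; [rewrite (_ : size s - _ = j)%N //|]; lia.
have gj' : gap (mirror s) (size s - i.+2) = gap s i.
  by rewrite gapE; [rewrite (_ : size s - _ = i)%N //|]; lia.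
split; rewrite ?size_mirror ?gi' ?gj' //; first by lia.
- by move=> k ks; rewrite gapE; [apply: gmin|]; lia.
- by move=> k ki; rewrite gapE; [apply: after|]; lia.
- by move=> k ik ks; rewrite gapE; [apply: before|]; lia.
Qed.

Lemma tail_cover s i j : least_gap_ends s i j -> 0 < gap s i ->
  exists X1 X2 : pred nat,
    [/\ first_gap_least (sieve s X1), first_gap_least (sieve s X2),
        forall k, (i <= k)%N -> X1 k || X2 k &
        forall k, (j.+1 < k)%N -> X1 k && X2 k].
Proof.
case=> /andP[ij jN] gj gmin _ after g_gt0.
have least := first_gap_least_sieve g_gt0 gmin.
pose X1 k := (k == i) || (i < k)%N && (k %% 2 == i.+1 %% 2)%N || (j.+1 < k)%N.
have X1_least : first_gap_least (sieve s X1).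
  apply: (least X1 i); rewrite /X1 //=; try lia.
  by move=> a ia Xa Xa1 aN; apply: after aN; lia.
have [/andP[iN /eqP gi1] | gi1] := boolP ((i.+2 < size s)%N && (gap s i.+1 == gap s i)).
  pose X2 k := (k == i.+1) || (i.+1 < k)%N && (k %% 2 == i %% 2)%N || (j.+1 < k)%N.
  exists X1, X2; split => //; try by move=> k; rewrite /X1 /X2; lia.
  apply: (least X2 i.+1); rewrite /X2 //=; try lia.
  by move=> a ia Xa Xa1 aN; apply: after aN; lia.
pose X2 k :=
  (k == i) || (k == i.+1) || (i.+1 < k)%N && (k %% 2 == i %% 2)%N || (j.+1 < k)%N.
exists X1, X2; split => //; try by move=> k; rewrite /X1 /X2; lia.
apply: (least X2 i); rewrite /X2 //=; try lia.
move=> a ia Xa Xa1 aN; have [ai1 | ai1] := eqVneq a i.+1.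
  subst a; rewrite lt_neqAle gmin // andbT eq_sym.
  by move: gi1; rewrite aN.
by apply: after aN; lia.
Qed.

Lemma head_cover s i j : least_gap_ends s i j -> 0 < gap s i ->
  exists X1 X2 : pred nat,
    [/\ last_gap_least (sieve s X1), last_gap_least (sieve s X2),
        forall k, (k <= j.+1)%N -> (k < size s)%N -> X1 k || X2 k &
        forall k, (k < i)%N -> X1 k && X2 k].
Proof.
move=> ends g_gt0; have [/andP[ij jN] gj _ _ _] := ends.
have ends' := least_gap_ends_mirror ends.
have g_gt0' : 0 < gap (mirror s) (size s - j.+2).
  by rewrite gap_mirror; [rewrite (_ : size s - _ = j)%N //|]; lia.
have [X1 [X2 [X1_least X2_least cover both]]] := tail_cover ends' g_gt0'.
exists (fun k => X1 ((size s).-1 - k)%N), (fun k => X2 ((size s).-1 - k)%N); split.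
- by apply: last_gap_least_mirror; rewrite -sieve_mirror.
- by apply: last_gap_least_mirror; rewrite -sieve_mirror.
- by move=> k kj ks; apply: cover; lia.
- by move=> k ki; apply: both; lia.
Qed.

Lemma double_cover s : (1 < size s)%N -> (forall k, (k.+1 < size s)%N -> 0 < gap s k) ->
  exists X : 'I_4 -> pred nat,
    (forall n, first_gap_least (sieve s (X n)) \/ last_gap_least (sieve s (X n))) /\
    forall k, (k < size s)%N -> (2 <= \sum_(n < 4) X n k)%N.
Proof.
move=> s2 gap_gt0; have [i [j ends]] := exists_least_gap_ends s2.
have [/andP[ij jN] _ _ _ _] := ends.
have g_gt0 : 0 < gap s i by apply: gap_gt0; lia.
have [X1 [X2 [X1_least X2_least cover12 both12]]] := tail_cover ends g_gt0.
have [X3 [X4 [X3_least X4_least cover34 both34]]] := head_cover ends g_gt0.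
exists (fun n => nth xpred0 [:: X1; X2; X3; X4] n); split.
  by case=> [[|[|[|[|//]]]] _] /=; [left | left | right | right].
move=> k ks; rewrite !big_ord_recl big_ord0 /=.
have [ki | ik] := ltnP k i.
  by move: (both34 k ki) => /andP[-> ->]; rewrite addnA leq_addl.
have [jk | kj] := ltnP j.+1 k.
  by move: (both12 k jk) => /andP[-> ->].
move: (cover12 k ik) (cover34 k kj ks).
by case: (X1 k); case: (X2 k); case: (X3 k); case: (X4 k).
Qed.

Definition restr (f : laurentN) (Y : pred int) : laurentN :=
  [fsfun k in lsupp f => if Y k then f k else 0%N | 0%N].

Lemma restrE (f : laurentN) Y k : restr f Y k = if Y k then f k else 0%N.
Proof.
rewrite /restr fsfun_fun; case: ifPn => // kf.
by move: kf; rewrite /lsupp memNfinsupp => /eqP ->; case: (Y k).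
Qed.

Lemma mem_lsupp_restr (f : laurentN) Y k : (k \in lsupp (restr f Y)) = Y k && (k \in lsupp f).
Proof. by rewrite /lsupp !mem_finsupp restrE; case: (Y k). Qed.

Lemma restr_split (f : laurentN) Y k : f k = (restr f Y k + restr f (predC Y) k)%N.
Proof. by rewrite !restrE /=; case: (Y k); rewrite ?addn0. Qed.

Lemma leval1_restr (f : laurentN) Y : leval1 (restr f Y) = (\sum_(k <- lsupp f | Y k) f k)%N.
Proof.
rewrite /leval1 (big_fset_incl _ (B := lsupp f)) /= ?[RHS]big_mkcond.
- by apply: eq_bigr => k _; rewrite restrE.
- by apply/fsubsetP => k; rewrite mem_lsupp_restr => /andP[].
- by move=> k _; rewrite /lsupp memNfinsupp => /eqP.
Qed.

Lemma leval1_restr_split (f : laurentN) Y :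
  leval1 f = (leval1 (restr f Y) + leval1 (restr f (predC Y)))%N.
Proof. by rewrite !leval1_restr [in LHS]/leval1 (bigID Y). Qed.

Section SortGe.
Let ge_total : total (fun a b : int => b <= a).
Proof. by move=> a b; exact: le_total. Qed.
Let ge_trans : transitive (fun a b : int => b <= a).
Proof. by move=> b a c /= ba cb; exact: le_trans cb ba. Qed.
Let ge_anti : antisymmetric (fun a b : int => b <= a).
Proof. by move=> a b /andP[ba ab]; apply: le_anti; rewrite ab ba. Qed.

Lemma lexps_restr (f : laurentN) Y : lexps (restr f Y) = filter Y (lexps f).
Proof.
rewrite /lexps filter_sort //; apply/perm_sortP => //.
apply: uniq_perm; rewrite ?filter_uniq ?fset_uniq // => k.
by rewrite mem_filter mem_lsupp_restr.
Qed.

Lemma gap_lexps_gt0 (f : laurentN) k : (k.+1 < size (lexps f))%N -> 0 < gap (lexps f) k.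
Proof.
move=> ks; have sorted_f : sorted (fun a b : int => b <= a) (lexps f) by apply: sort_sorted.
have uniq_f : uniq (lexps f) by rewrite sort_uniq fset_uniq.
rewrite subr_gt0 lt_def (sorted_ltn_nth ge_trans 0 sorted_f) ?inE ?andbT //; last by lia.
by rewrite nth_uniq ?(ltnW ks) // ltn_eqF.
Qed.
End SortGe.

Lemma filter_index_sieve s X : uniq s -> [seq x <- s | X (index x s)] = sieve s X.
Proof.
move=> s_uniq; set P := fun x => X (index x s).
rewrite /sieve -[in LHS](mkseq_nth 0 s) /mkseq filter_map; congr map.
by apply: eq_in_filter => k; rewrite mem_iota /= => kN; rewrite /P index_uniq.
Qed.

Lemma hyper_monolithic_gap_least (f : laurentN) :
  first_gap_least (lexps f) \/ last_gap_least (lexps f) -> hyper_monolithic f.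
Proof.
rewrite /hyper_monolithic (_ : #|` lsupp f| = size (lexps f)); last by rewrite size_sort.
case=> -[s2 least]; split => //; [left | right] => m.
  by move=> m1 mN; apply: least; lia.
move=> mN; have := least m; rewrite /gap (_ : (size (lexps f)).-2.+1 = (size (lexps f)).-1)%N.
  by apply; lia.
by lia.
Qed.

Lemma exists_heavy_restr (I : finType) (i0 : I) (f : laurentN) (Y : I -> pred int) c :
  (forall k, k \in lsupp f -> c <= \sum_i Y i k)%N ->
  exists i, (c * leval1 f <= #|I| * leval1 (restr f (Y i)))%N.
Proof.
move=> cover; pose w i := leval1 (restr f (Y i)).
have total : (c * leval1 f <= \sum_i w i)%N.
  rewrite /w; under eq_bigr do rewrite leval1_restr big_mkcond.
  rewrite exchange_big /leval1 big_distrr /= big_seq [X in (_ <= X)%N]big_seq.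
  apply: leq_sum => k kf; apply: leq_trans (leq_mul (cover k kf) (leqnn (f k))) _.
  by rewrite big_distrl /=; apply: leq_sum => i _; case: (Y i k); rewrite ?mul1n.
exists [arg max_(i > i0) w i]; case: arg_maxnP => // i _ i_max.
apply: leq_trans total _; rewrite -sum_nat_const.
by apply: leq_sum => j _; apply: i_max.
Qed.

Theorem lemma2p9 (f : laurentN) :
  (3 <= #|` lsupp f|)%N ->
  exists g h : laurentN,
    (forall k : int, f k = (g k + h k)%N) /\
    hyper_monolithic g /\ (leval1 h <= leval1 g)%N.
Proof.
rewrite (_ : #|` lsupp f| = size (lexps f)); last by rewrite size_sort.
set s := lexps f => s3.
have s_uniq : uniq s by rewrite sort_uniq fset_uniq.
have [X [X_least X_cover]] := double_cover (ltnW s3) (@gap_lexps_gt0 f).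
pose Y n x := X n (index x s).
have [|n heavy] := @exists_heavy_restr 'I_4 ord0 f Y 2.
  by move=> x xf; apply: X_cover; rewrite index_mem mem_sort.
exists (restr f (Y n)), (restr f (predC (Y n))); split; first exact: restr_split.
split; first by apply: hyper_monolithic_gap_least; rewrite lexps_restr filter_index_sieve //; apply: X_least.
rewrite card_ord (leval1_restr_split f (Y n)) in heavy.
by move: heavy; move: (leval1 (restr f (Y n))) (leval1 (restr f (predC (Y n)))) => a b; lia.
Qed.
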